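(* For all integers $n,d,p\ge 0$, $$P_p(n,\omega^d)=\begin{cases}0 & d=0,\ n\ge 2\\ 1 & n=0,\ p=0\\ 0 & n=0,\ p\ge 1\\ 1 & d=0,\ n=1,\ p=0\\ 0 & d=0,\ n=1,\ p\ge 1\\ 1 & d=1,\ n\ge 1,\ n=p\\ 0 & d=1,\ n\ge1,\ n\ne p\\ 0 & d\ge 2,\ n\ge 1,\ p=0\\ \displaystyle\sum_{j=1}^{n}\sum_{i=0}^{p-1}\binom{p-1}{i}P_i(j,\omega^{d-1})\,P_{p-1-i}(n-j,\omega^{d}) & d\ge2,\ n\ge1,\ p\ge1.\end{cases}$$
   Context: Coloring rules. Fix integers $n,d,k\ge 0$. Every ordinal $\beta<\omega^d\cdot k$ is uniquely written $\beta=\omega^d\cdot b+\omega^{d-1}a_{d-1}+\cdots+\omega a_1+a_0$ with $0\le b<k$ and $a_j\in\mathbb{N}$. A coloring rule (CR) on $\binom{\omega^d\cdot k}{n}$ is a pair $(\mathcal{Y},\preceq)$ where $\mathcal{Y}:\{1,\dots,n\}\to\{0,\dots,k-1\}$ (one writes $b_i=\mathcal{Y}(i)$) and $\preceq$ is a total preorder on the index set $I=\{(i,j):1\le i\le n,\ 0\le j<d\}$ (one thinks of $(i,j)$ as a variable $a_{i,j}$; write $(i,j)\equiv(i',j')$ if both $(i,j)\preceq(i',j')$ and $(i',j')\preceq(i,j)$, and $(i,j)\prec(i',j')$ if $(i,j)\preceq(i',j')$ but not $(i',j')\preceq(i,j)$), satisfying: (1) if $d\ge1$ then $(i,0)\prec(i',0)$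 whenever $i<i'$; if $d=0$ then $\mathcal{Y}(i)<\mathcal{Y}(i')$ whenever $i<i'$; (2) if $(i,j)\equiv(i',j)$ for some $j$, then $\mathcal{Y}(i)=\mathcal{Y}(i')$; (3) $(i,j)\prec(i,j')$ whenever $j>j'$; (4) $(i,j)\equiv(i',j')$ implies $j=j'$; (5) for $j>0$, if $(i,j)\not\equiv(i',j)$ then $(i,j-1)\not\equiv(i',j-1)$. The size of a CR is the number of $\equiv$-equivalence classes of $I$. $P_p(n,\omega^d\cdot k)$ denotes the number of CRs of size $p$ on $\binom{\omega^d\cdot k}{n}$, and $P_p(n,\omega^d)$ means $P_p(n,\omega^d\cdot 1)$ (so all $b_i=0$). *)

From mathcomp Require Import all_boot.
Set Implicit Arguments. Unset Strict Implicit. Unset Printing Implicit Defensive.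

(* Index set I = {(i,j) : 1 <= i <= n, 0 <= j < d}, with i shifted to 'I_n
   (i.e. 0-based, order preserved). *)
Definition CRidx (n d : nat) : finType := ('I_n * 'I_d)%type.

(* Candidate data: Y : {1..n} -> {0..k-1} and a binary relation (the preorder)
   on the index set, given as a finite boolean function on pairs. *)
Definition CRdata (n d k : nat) : finType :=
  ({ffun 'I_n -> 'I_k} * {ffun (CRidx n d * CRidx n d) -> bool})%type.

Section CR.
Variables (n d k : nat).
Implicit Types (c : CRdata n d k).

Definition crY c : 'I_n -> 'I_k := c.1.
Definition crle c (x y : CRidx n d) : bool := c.2 (x, y).
Definition crequiv c x y := crle c x y && crle c y x.
Definition crlt c x y := crle c x y && ~~ crle c y x.

Definition is_total_preorder c : bool :=
  [forall x, forall y, crle c x y || crle c y x] &&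
  [forall x, forall y, forall z, crle c x y && crle c y z ==> crle c x z].

Definition cond1 c : bool :=
  if 0 < d then
    [forall i : 'I_n, forall i' : 'I_n, forall j : 'I_d,
       (val j == 0) && (i < i') ==> crlt c (i, j) (i', j)]
  else
    [forall i : 'I_n, forall i' : 'I_n, (i < i') ==> (crY c i < crY c i')].

Definition cond2 c : bool :=
  [forall i : 'I_n, forall i' : 'I_n, forall j : 'I_d,
     crequiv c (i, j) (i', j) ==> (crY c i == crY c i')].

Definition cond3 c : bool :=
  [forall i : 'I_n, forall j : 'I_d, forall j' : 'I_d,
     (j' < j) ==> crlt c (i, j) (i, j')].

Definition cond4 c : bool :=
  [forall i : 'I_n, forall i' : 'I_n, forall j : 'I_d, forall j' : 'I_d,
     crequiv c (i, j) (i', j') ==> (j == j')].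

Definition cond5 c : bool :=
  [forall i : 'I_n, forall i' : 'I_n, forall j : 'I_d, forall j' : 'I_d,
     (val j == (val j').+1) && ~~ crequiv c (i, j) (i', j)
       ==> ~~ crequiv c (i, j') (i', j')].

Definition is_CR c : bool :=
  [&& is_total_preorder c, cond1 c, cond2 c, cond3 c, cond4 c & cond5 c].

Definition CRsize c : nat :=
  #|[set [set y | crequiv c x y] | x : CRidx n d]|.

End CR.

(* P_p(n, omega^d * k) *)
Definition Pcount (p n d k : nat) : nat :=
  #|[set c : CRdata n d k | is_CR c & CRsize c == p]|.

Definition P (p n d : nat) : nat := Pcount p n d 1.

From mathcomp Require Import all_boot.
Set Implicit Arguments. Unset Strict Implicit. Unset Printing Implicit Defensive.

(* A coloring rule with k = 1 and size p is its rank function f : I -> 'I_p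
   (f x = number of classes below x), which must be onto.  Reading f row by
   row, rule i becomes the row (f(i,0), ..., f(i,d-1)); the conditions say that
   each row decreases strictly, a value never occurs in two different columns,
   rows are ordered (hence determined) by their first entry, and rows that
   agree in column j-1 agree in column j.  So P_p(n, omega^d) counts n-sets of
   such rows whose values cover 'I_p, and the count only depends on the number
   of values.  For d >= 2 the least value 0 sits in the last column; the rows
   ending in 0, with that column deleted, form a family of k rows of length
   d-1 on a set of i other values, and the remaining n-k rows form a family of
   length d on the p-1-i values left.  Conversely any two such families glue
   back, which gives the recursion after choosing the i values in
   'C(p-1, i) ways. *)

Lemma card_fibers (aT rT : finType) (X : {set aT}) (f : aT -> rT) :
  #|X| = \sum_(r : rT) #|[set x in X | f x == r]|.
Proof.
rewrite -sum1_card (partition_big f xpredT) //=; apply: eq_bigr => r _.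
by rewrite -sum1_card; apply: eq_bigl => x; rewrite !inE.
Qed.

Lemma card_fibers_nat (T : finType) (X : {set T}) (f : T -> nat) N :
  {in X, forall x, f x < N} -> #|X| = \sum_(0 <= k < N) #|[set x in X | f x == k]|.
Proof.
rewrite big_mkord; case: N => [|N] f_lt.
  rewrite big_ord0; apply/eqP; rewrite cards_eq0; apply/eqP/setP => x.
  by rewrite inE; apply/negP => /f_lt.
rewrite (card_fibers X (fun x => inord (f x) : 'I_N.+1)); apply: eq_bigr => k _.
apply: eq_card => x; rewrite !inE -val_eqE /=.
by case: (boolP (x \in X)) => //= /f_lt/inordK ->.
Qed.

Lemma sum_set_card m (F : nat -> nat) :
  \sum_(B : {set 'I_m}) F #|B| = \sum_(i < m.+1) 'C(m, i) * F i.
Proof.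
have card_lt (B : {set 'I_m}) : #|B| < m.+1.
  by rewrite ltnS -[m in _ <= m]card_ord max_card.
rewrite (partition_big (fun B : {set 'I_m} => inord #|B| : 'I_m.+1) xpredT) //=.
apply: eq_bigr => i _; rewrite (eq_bigr (fun _ => F i)); last first.
  by move=> B /eqP <-; rewrite inordK.
rewrite sum_nat_const -[m in 'C(m, _)]card_ord -card_draws; congr (_ * _).
by apply: eq_card => B; rewrite !inE unfold_in /= inordK.
Qed.

Lemma disjoint_cover_setC (T : finType) (X Y : {set T}) :
  X :|: Y = setT -> [disjoint X & Y] -> Y = ~: X.
Proof.
move=> cover dis; rewrite -setTD -cover setDUl setDv set0U.
by apply/esym/setDidPl; rewrite disjoint_sym.
Qed.

Lemma card_ord_lt p m : m <= p -> #|[set v : 'I_p | v < m]| = m.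
Proof.
move=> le_mp; rewrite -sum1_card (eq_bigl (fun v : 'I_p => v < m)) => [|v].
  by rewrite (big_ord_narrow le_mp) sum1_card card_ord.
by rewrite inE.
Qed.

Section IncreasingOrd.
Variables (q p : nat) (h : 'I_q -> 'I_p).
Hypothesis h_incr : {homo h : a b / a < b}.

Lemma incr_ord_mono : {mono h : a b / a < b}.
Proof.
move=> a b; case: (ltngtP a b) => [/h_incr // | /h_incr lt_hb | /val_inj ->].
  by apply/negbTE; rewrite -leqNgt ltnW.
exact: ltnn.
Qed.

Lemma incr_ord_inj : injective h.
Proof.
move=> a b eq_h; apply: val_inj.
by case: (ltngtP a b) => // /h_incr; rewrite eq_h ltnn.
Qed.
End IncreasingOrd.

Section KeyIncreasing.
Variables (X : finType) (key : X -> nat).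

Definition key_increasing n (g : {ffun 'I_n -> X}) : bool :=
  [forall i : 'I_n, forall i' : 'I_n, (i < i') ==> (key (g i) < key (g i'))].

Lemma key_increasingP n (g : {ffun 'I_n -> X}) :
  reflect {homo g : i i' / i < i' >-> key i < key i'} (key_increasing g).
Proof. exact: 'forall_'forall_implyP. Qed.

Lemma key_increasing_inj n (g : {ffun 'I_n -> X}) :
  key_increasing g -> injective (key \o g).
Proof.
move/key_increasingP => g_incr i i' /= eq_g; apply: val_inj.
by case: (ltngtP i i') => [/g_incr | /g_incr | //]; rewrite eq_g ltnn.
Qed.

Lemma key_increasingE n (g : {ffun 'I_n -> X}) :
  key_increasing g = sorted (relpre key ltn) (codom g).
Proof.
apply/key_increasingP/idP => [g_incr | sg i i' lt_ii'].
  rewrite codomE; apply: (homo_sorted g_incr).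
  by have := iota_ltn_sorted 0 n; rewrite -val_enum_ord sorted_map.
rewrite codomE sorted_map in sg.
have := sorted_ltn_nth (fun a b c => @ltn_trans (key (g a)) _ _) i sg.
by move=> /(_ i i'); rewrite !inE size_enum_ord !nth_ord_enum; apply.
Qed.

Lemma key_increasing_eq n (g g' : {ffun 'I_n -> X}) :
  key_increasing g -> key_increasing g' -> g @: setT = g' @: setT -> g = g'.
Proof.
rewrite !key_increasingE => sg sg' /setP eq_im.
have mem_im (h : {ffun 'I_n -> X}) x : (x \in h @: setT) = (x \in codom h).
  by apply/imsetP/codomP => [[i _ ->] | [i ->]]; exists i.
have ltn_tr : transitive (relpre key ltn) by move=> ? ? ?; apply: ltn_trans.
have ltn_irr : irreflexive (relpre key ltn) by move=> ?; apply: ltnn.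
apply: (can_inj fgraphK); apply: val_inj; rewrite /= -!codom_ffun.
apply: (irr_sorted_eq ltn_tr ltn_irr sg sg') => x.
by rewrite -!mem_im eq_im.
Qed.

Lemma exists_key_increasing (A : {set X}) : {in A &, injective key} ->
  exists2 g : {ffun 'I_#|A| -> X}, key_increasing g & g @: setT = A.
Proof.
move=> key_inj; pose s := sort (relpre key leq) (enum A).
have size_s : size s == #|A| by rewrite size_sort cardE.
pose t := Tuple size_s.
have mem_t x : (x \in t) = (x \in A) by rewrite mem_sort mem_enum.
have codom_t : codom [ffun i => tnth t i] = s.
  by rewrite codomE (eq_map (ffunE _)) map_tnth_enum.
exists [ffun i => tnth t i].
  rewrite key_increasingE codom_t -sorted_map ltn_sorted_uniq_leq sorted_map.
  rewrite sort_sorted ?andbT; last by move=> x y; apply: leq_total.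
  rewrite map_inj_in_uniq ?sort_uniq ?enum_uniq // => x y.
  by rewrite !mem_sort !mem_enum; apply: key_inj.
apply/setP => x; rewrite -mem_t.
by apply/imsetP/tnthP => [[i _ ->] | [i ->]]; exists i; rewrite ?ffunE.
Qed.

Lemma card_key_increasing n (Q : pred {set X}) :
  (forall A, Q A -> {in A &, injective key}) ->
  #|[set g : {ffun 'I_n -> X} | key_increasing g && Q (g @: setT)]| =
  #|[set A : {set X} | (#|A| == n) && Q A]|.
Proof.
move=> key_inj; set G := [set g | _].
have im_inj : {in G &, injective (fun g : {ffun 'I_n -> X} => g @: setT)}.
  move=> g g'; rewrite !inE => /andP[incr_g _] /andP[incr_g' _].
  exact: key_increasing_eq.
rewrite -(card_in_imset im_inj); apply: eq_card => A; rewrite inE.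
apply/imsetP/andP => [[g] | [/eqP card_A QA]]; last subst n.
  rewrite inE => /andP[/key_increasing_inj/inj_compr g_inj Qg] ->.
  by rewrite card_imset ?cardsT ?card_ord.
have [g incr_g im_g] := exists_key_increasing (key_inj A QA).
by exists g; rewrite // inE incr_g im_g.
Qed.
End KeyIncreasing.
Section CRConditions.
Variables (n d k : nat).
Implicit Types c : CRdata n d k.

Lemma total_preorderP c :
  reflect ((forall x y, crle c x y || crle c y x) /\
           (forall x y z, crle c x y -> crle c y z -> crle c x z))
          (is_total_preorder c).
Proof.
apply: (iffP andP) => [[/'forall_forallP tot /'forall_'forall_'forall_implyP tr]|[tot tr]].
  by split=> // x y z xy yz; apply: (tr x y z); rewrite xy.
split; first by apply/'forall_forallP.
by apply/'forall_'forall_'forall_implyP => x y z /andP[]; apply: tr.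
Qed.

Lemma cond3P c :
  reflect (forall i (j j' : 'I_d), j' < j -> crlt c (i, j) (i, j')) (cond3 c).
Proof. exact: 'forall_'forall_'forall_implyP. Qed.

Lemma cond4P c :
  reflect (forall i i' (j j' : 'I_d), crequiv c (i, j) (i', j') -> j = j') (cond4 c).
Proof.
apply: (iffP 'forall_'forall_'forall_'forall_implyP) => eq_col i i' j j' /eq_col.
  by move/eqP.
by move->.
Qed.

Lemma cond5P c :
  reflect (forall i i' (j j' : 'I_d), val j = (val j').+1 ->
             crequiv c (i, j') (i', j') -> crequiv c (i, j) (i', j))
          (cond5 c).
Proof.
apply: (iffP 'forall_'forall_'forall_'forall_implyP) => agree i i' j j'.
  by move=> e; apply: contraTT => ne; apply: (agree i i' j j'); rewrite e eqxx ne.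
by case/andP => /eqP e; apply: contra; apply: agree.
Qed.
End CRConditions.

Lemma cond1P n d k (c : CRdata n d.+1 k) :
  reflect (forall (i i' : 'I_n) (j : 'I_d.+1), val j = 0 -> i < i' -> crlt c (i, j) (i', j))
          (cond1 c).
Proof.
apply: (iffP 'forall_'forall_'forall_implyP) => incr i i' j.
  by move=> j0 lt; apply: (incr i i' j); rewrite j0 lt.
by case/andP => /eqP; apply: incr.
Qed.

Lemma cond2_unit n d (c : CRdata n d 1) : cond2 c.
Proof. by apply/'forall_'forall_'forall_implyP => i i' j _; rewrite !ord1. Qed.

Section Rank.
Variables (n d k : nat) (c : CRdata n d k).
Local Notation I := (CRidx n d).
Hypothesis c_total : forall x y : I, crle c x y || crle c y x.
Hypothesis c_trans : forall x y z : I, crle c x y -> crle c y z -> crle c x z.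

Definition cr_class (x : I) := [set y | crequiv c x y].
Definition cr_below (x : I) := [set y | crlt c y x].
Definition cr_rank (x : I) := #|cr_class @: cr_below x|.

Lemma crle_refl x : crle c x x.
Proof. by have := c_total x x; rewrite orbb. Qed.

Lemma cr_class_notin_below x : cr_class x \notin cr_class @: cr_below x.
Proof.
apply/imsetP => -[y]; rewrite inE => /andP[_ not_xy] /setP/(_ y).
by rewrite !inE /crequiv !crle_refl => /andP[xy _]; rewrite xy in not_xy.
Qed.

Lemma cr_below_sub x y : crle c x y -> cr_below x \subset cr_below y.
Proof.
move=> xy; apply/subsetP => z; rewrite !inE => /andP[zx not_xz].
rewrite /crlt (c_trans zx xy); apply: contra not_xz; exact: c_trans.
Qed.

Lemma crle_rank x y : crle c x y = (cr_rank x <= cr_rank y).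
Proof.
apply/idP/idP => [xy|]; first by apply/subset_leq_card/imsetS/cr_below_sub.
apply: contraTT => not_xy.
have yx : crle c y x by move: (c_total x y); rewrite (negPf not_xy).
rewrite -ltnNge; apply/proper_card/properP; split; first exact/imsetS/cr_below_sub.
exists (cr_class y); last exact: cr_class_notin_below.
by apply: imset_f; rewrite inE /crlt yx.
Qed.

Lemma cr_rank_lt_size x : cr_rank x < CRsize c.
Proof.
apply/proper_card/properP; split.
  by apply/subsetP => _ /imsetP[y _ ->]; apply: imset_f.
by exists (cr_class x); [apply: imset_f | apply: cr_class_notin_below].
Qed.
End Rank.

Section RankEncoding.
Variables (n d : nat).
Local Notation I := (CRidx n d).

Definition cr_of_rank p (f : {ffun I -> 'I_p}) : CRdata n d 1 :=
  ([ffun=> ord0], [ffun xy => f xy.1 <= f xy.2]).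

Section OfRank.
Variables (p : nat) (f : {ffun I -> 'I_p}).

Lemma crle_of_rank x y : crle (cr_of_rank f) x y = (f x <= f y).
Proof. by rewrite /crle ffunE. Qed.

Lemma crequiv_of_rank x y : crequiv (cr_of_rank f) x y = (f x == f y).
Proof. by rewrite /crequiv !crle_of_rank -eqn_leq. Qed.

Lemma crlt_of_rank x y : crlt (cr_of_rank f) x y = (f x < f y).
Proof. by rewrite /crlt !crle_of_rank -ltnNge; apply/andb_idl/ltnW. Qed.

Lemma card_classes_of_rank (Y : {set I}) : #|cr_class (cr_of_rank f) @: Y| = #|f @: Y|.
Proof.
have -> : cr_class (cr_of_rank f) @: Y = (fun v => f @^-1: [set v]) @: (f @: Y).
  rewrite -imset_comp; apply: eq_imset => x; apply/setP => y.
  by rewrite !inE crequiv_of_rank eq_sym.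
apply: card_in_imset => _ _ /imsetP[x _ ->] /imsetP[y _ ->] /setP/(_ x).
by rewrite !inE eqxx => /esym/eqP.
Qed.

Lemma CRsize_of_rank : CRsize (cr_of_rank f) = #|f @: setT|.
Proof.
rewrite -card_classes_of_rank; apply: eq_card => C.
by apply/imsetP/imsetP => -[x _ ->]; exists x.
Qed.

Lemma total_preorder_of_rank : is_total_preorder (cr_of_rank f).
Proof.
apply/total_preorderP; split=> [x y | x y z]; rewrite !crle_of_rank; first exact: leq_total.
exact: leq_trans.
Qed.

Lemma cr_rank_of_rank x : f @: setT = setT -> cr_rank (cr_of_rank f) x = f x.
Proof.
move=> f_onto; rewrite /cr_rank card_classes_of_rank.
rewrite -[RHS](card_ord_lt (ltnW (ltn_ord (f x)))).
apply: eq_card => v; rewrite inE; apply/imsetP/idP => [[y] | lt_v].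
  by rewrite inE crlt_of_rank => lt_y ->.
have : v \in f @: setT by rewrite f_onto inE.
by case/imsetP => y _ eq_v; exists y; rewrite // inE crlt_of_rank -eq_v.
Qed.
End OfRank.

Lemma cr_of_rank_onto p (c : CRdata n d 1) : is_total_preorder c -> CRsize c <= p ->
  exists f : {ffun I -> 'I_p}, cr_of_rank f = c.
Proof.
move=> /total_preorderP[tot tr] le_sp.
exists [ffun x => Ordinal (leq_trans (cr_rank_lt_size tot x) le_sp)].
rewrite [RHS]surjective_pairing; congr (_, _); apply/ffunP.
  by move=> i; rewrite ffunE (ord1 (c.1 i)).
by move=> [x y]; rewrite !ffunE /= -[c.2 _]/(crle c x y) (crle_rank tot tr).
Qed.

Lemma Pcount_rank p : Pcount p n d 1 =
  #|[set f : {ffun I -> 'I_p} | (f @: setT == setT) && is_CR (cr_of_rank f)]|.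
Proof.
set F := [set f | _].
have rank_inj : {in F &, injective (@cr_of_rank p)}.
  move=> f g; rewrite !inE => /andP[/eqP f_onto _] /andP[/eqP g_onto _] eq_fg.
  apply/ffunP => x; apply: val_inj.
  by rewrite /= -(cr_rank_of_rank x f_onto) -(cr_rank_of_rank x g_onto) eq_fg.
rewrite -(card_in_imset rank_inj); apply: eq_card => c; rewrite inE.
apply/andP/imsetP => [[c_CR /eqP c_size] | [f]]; last first.
  rewrite inE => /andP[/eqP f_onto f_CR] ->.
  by rewrite f_CR CRsize_of_rank f_onto cardsT card_ord.
have /andP[c_tp _] := c_CR.
have [f eq_c] := cr_of_rank_onto c_tp (eq_leq c_size).
exists f => //; rewrite inE eq_c c_CR andbT eqEcard subsetT /=.
by rewrite cardsT card_ord -CRsize_of_rank eq_c c_size.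
Qed.
End RankEncoding.

Definition row d p := {ffun 'I_d -> 'I_p}.

Section Rows.
Variables (d p : nat).
Implicit Types A : {set row d p}.

(* Conditions (3), (4), (1) and (5) of a coloring rule, read on its rows. *)
Record admissible_spec A : Prop := AdmissibleSpec {
  adm_decr : forall x, x \in A -> forall j j' : 'I_d, j' < j -> x j < x j';
  adm_col : forall x y, x \in A -> y \in A -> forall j j', x j = y j' -> j = j';
  adm_head : forall x y, x \in A -> y \in A ->
    forall j : 'I_d, val j = 0 -> x j = y j -> x = y;
  adm_up : forall x y, x \in A -> y \in A ->
    forall j j' : 'I_d, val j = (val j').+1 -> x j' = y j' -> x j = y j }.

Definition admissible A : bool :=
  [&& [forall x in A, forall j : 'I_d, forall j' : 'I_d, (j' < j) ==> (x j < x j')],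
      [forall x in A, forall y in A, forall j, forall j', (x j == y j') ==> (j == j')],
      [forall x in A, forall y in A, forall j : 'I_d,
         (val j == 0) && (x j == y j) ==> (x == y)] &
      [forall x in A, forall y in A, forall j : 'I_d, forall j' : 'I_d,
         (val j == (val j').+1) && (x j' == y j') ==> (x j == y j)]].

Lemma admissibleP A : reflect (admissible_spec A) (admissible A).
Proof.
apply: (iffP and4P) => [[decr col head up] | [decr col head up]]; last split.
- move: col head up => /'forall_in_'forall_in_'forall_'forall_implyP col.
  move=> /'forall_in_'forall_in_'forall_implyP head.
  move=> /'forall_in_'forall_in_'forall_'forall_implyP up; split.
  + exact/'forall_in_'forall_'forall_implyP.
  + by move=> x y xA yA j j' /eqP/(col x xA y yA)/eqP.
  + move=> x y xA yA j j0 eq_xy; apply/eqP/(head x xA y yA j).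
    by rewrite j0 eq_xy !eqxx.
  + move=> x y xA yA j j' e eq_xy; apply/eqP/(up x xA y yA j j').
    by rewrite e eq_xy !eqxx.
- exact/'forall_in_'forall_'forall_implyP.
- apply/'forall_in_'forall_in_'forall_'forall_implyP => x xA y yA j j'.
  by move=> /eqP/(col x y xA yA)->.
- apply/'forall_in_'forall_in_'forall_implyP => x xA y yA j /andP[/eqP j0 /eqP eq_xy].
  by rewrite (head x y xA yA j j0 eq_xy).
- apply/'forall_in_'forall_in_'forall_'forall_implyP => x xA y yA j j'.
  by case/andP => /eqP e /eqP eq_xy; rewrite (up x y xA yA j j' e eq_xy).
Qed.

Lemma admissibleS A A' : A' \subset A -> admissible A -> admissible A'.
Proof.
move=> /subsetP sub /admissibleP[decr col head up]; apply/admissibleP; split.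
- by move=> x /sub; apply: decr.
- by move=> x y /sub xA /sub yA; apply: col.
- by move=> x y /sub xA /sub yA; apply: head.
- by move=> x y /sub xA /sub yA; apply: up.
Qed.

Definition values A : {set 'I_p} := [set x j | x : row d p in A, j : 'I_d].

Definition nadm n (V : {set 'I_p}) :=
  #|[set A | [&& admissible A, values A == V & #|A| == n]]|.

Lemma mem_values A x j : x \in A -> x j \in values A.
Proof. by move=> xA; apply/imset2P; exists x j. Qed.

Lemma valuesU A1 A2 : values (A1 :|: A2) = values A1 :|: values A2.
Proof.
apply/setP => v; rewrite inE; apply/imset2P/orP => [[x j /setUP[] xA _ ->] | ].
- by left; apply: mem_values.
- by right; apply: mem_values.
by case=> /imset2P[x j xA _ ->]; exists x j; rewrite // inE xA ?orbT.
Qed.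

Section DisjointValues.
Variables A1 A2 : {set row d p}.
Hypothesis disjoint_vals : [disjoint values A1 & values A2].

Lemma share_value_same_side x y j j' :
  x \in A1 :|: A2 -> y \in A1 :|: A2 -> x j = y j' ->
  (x \in A1) && (y \in A1) || (x \in A2) && (y \in A2).
Proof.
have mixed u w i i' : u \in A1 -> w \in A2 -> u i = w i' -> False.
  move=> uA wA eq_uw; have := disjointFr disjoint_vals (mem_values i uA).
  by rewrite eq_uw mem_values.
case/setUP => xA /setUP[] yA eq_xy; rewrite xA yA ?orbT //.
  by case: (mixed _ _ _ _ xA yA eq_xy).
by case: (mixed _ _ _ _ yA xA (esym eq_xy)).
Qed.

Lemma admissibleU : admissible (A1 :|: A2) = admissible A1 && admissible A2.
Proof.
apply/idP/andP => [adm | [/admissibleP[d1 c1 h1 u1] /admissibleP[d2 c2 h2 u2]]].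
  by split; apply: admissibleS adm; rewrite ?subsetUl ?subsetUr.
apply/admissibleP; split.
- by move=> x /setUP[] xA; [apply: d1 | apply: d2].
- move=> x y xA yA j j' eq_xy.
  case/orP: (share_value_same_side xA yA eq_xy) => /andP[xA' yA'].
    exact: (c1 x y xA' yA' j j' eq_xy).
  exact: (c2 x y xA' yA' j j' eq_xy).
- move=> x y xA yA j j0 eq_xy.
  case/orP: (share_value_same_side xA yA eq_xy) => /andP[xA' yA'].
    exact: (h1 x y xA' yA' j j0 eq_xy).
  exact: (h2 x y xA' yA' j j0 eq_xy).
- move=> x y xA yA j j' e eq_xy.
  case/orP: (share_value_same_side xA yA eq_xy) => /andP[xA' yA'].
    exact: (u1 x y xA' yA' j j' e eq_xy).
  exact: (u2 x y xA' yA' j j' e eq_xy).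
Qed.
End DisjointValues.
End Rows.

Section RowsOfRank.
Variables (n d p : nat).
Local Notation I := (CRidx n d.+1).
Implicit Types (f : {ffun I -> 'I_p}) (g : {ffun 'I_n -> row d.+1 p}).

Definition rows_of f : {ffun 'I_n -> row d.+1 p} := [ffun i => [ffun j => f (i, j)]].
Definition of_rows g : {ffun I -> 'I_p} := [ffun ij => g ij.1 ij.2].

Lemma rows_ofK : cancel rows_of of_rows.
Proof. by move=> f; apply/ffunP => -[i j]; rewrite !ffunE. Qed.

Lemma of_rowsK : cancel of_rows rows_of.
Proof. by move=> g; apply/ffunP => i; apply/ffunP => j; rewrite !ffunE. Qed.

Definition row_head (x : row d.+1 p) : nat := x ord0.

Lemma values_rows_of f : values (rows_of f @: setT) = f @: setT.
Proof.
apply/setP => v; apply/imset2P/imsetP => [[_ j /imsetP[i _ ->] _ ->] | [[i j] _ ->]].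
  by exists (i, j); rewrite ?ffunE.
by exists (rows_of f i) j; rewrite ?imset_f ?ffunE.
Qed.

Lemma is_CR_rows_of f : is_CR (cr_of_rank f) =
  key_increasing row_head (rows_of f) && admissible (rows_of f @: setT).
Proof.
set g := rows_of f; have g_val i j : g i j = f (i, j) by rewrite !ffunE.
have g_mem i : g i \in g @: setT by apply: imset_f.
rewrite /is_CR total_preorder_of_rank cond2_unit /=.
apply/and4P/andP => [[/cond1P incr /cond3P decr /cond4P col /cond5P up] | ].
  have g_incr : key_increasing row_head g.
    apply/key_increasingP => i i' lt_ii'.
    by rewrite /row_head !g_val -crlt_of_rank; apply: incr.
  split=> //; apply/admissibleP; split.
  - by move=> _ /imsetP[i _ ->] j j' lt_j; rewrite !g_val -crlt_of_rank; apply: decr.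
  - move=> _ _ /imsetP[i _ ->] /imsetP[i' _ ->] j j'; rewrite !g_val => eq_f.
    by apply: (col i i'); rewrite crequiv_of_rank eq_f.
  - move=> _ _ /imsetP[i _ ->] /imsetP[i' _ ->] j j0 eq_g.
    have j_head : j = ord0 by apply: val_inj.
    by congr (g _); apply: (key_increasing_inj g_incr); rewrite /= /row_head -j_head eq_g.
  - move=> _ _ /imsetP[i _ ->] /imsetP[i' _ ->] j j' e; rewrite !g_val => eq_f.
    by apply/eqP; have := up i i' j j' e; rewrite !crequiv_of_rank eq_f; apply.
move=> [g_incr /admissibleP[decr col _ up]]; split.
- apply/cond1P => i i' j j0 lt_ii'; rewrite crlt_of_rank -!g_val.
  have -> : j = ord0 by apply: val_inj.
  exact: (key_increasingP _ _ g_incr).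
- by apply/cond3P => i j j' lt_j; rewrite crlt_of_rank -!g_val; apply: decr.
- by apply/cond4P => i i' j j'; rewrite crequiv_of_rank -!g_val => /eqP; apply: col.
- apply/cond5P => i i' j j' e; rewrite !crequiv_of_rank -!g_val => /eqP eq_g.
  by apply/eqP; apply: up e eq_g.
Qed.

Lemma card_onto_rank_CR :
  #|[set f : {ffun I -> 'I_p} | (f @: setT == setT) && is_CR (cr_of_rank f)]| =
  nadm d.+1 n [set: 'I_p].
Proof.
pose Q (A : {set row d.+1 p}) := admissible A && (values A == setT).
have head_inj A : Q A -> {in A &, injective row_head}.
  by case/andP => /admissibleP[_ _ head _] _ x y xA yA /val_inj; apply: head.
have -> : [set f : {ffun I -> 'I_p} | (f @: setT == setT) && is_CR (cr_of_rank f)] =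
          rows_of @^-1: [set g | key_increasing row_head g && Q (g @: setT)].
  apply/setP => f; rewrite !inE is_CR_rows_of -values_rows_of /Q.
  by rewrite andbC -andbA.
rewrite on_card_preimset; last exact/onW_bij/(Bijective rows_ofK of_rowsK).
rewrite (card_key_increasing _ head_inj); apply: eq_card => A.
by rewrite !inE andbC -andbA.
Qed.
End RowsOfRank.

Lemma P_nadm p n d : P p n d.+1 = nadm d.+1 n [set: 'I_p].
Proof. by rewrite /P Pcount_rank card_onto_rank_CR. Qed.

Section Relabel.
Variables (d q p : nat) (h : 'I_q -> 'I_p).
Hypothesis h_incr : {homo h : a b / a < b}.

Definition relabel_row (x : row d q) : row d p := [ffun j => h (x j)].

Lemma relabel_row_inj : injective relabel_row.
Proof.
move=> x y /ffunP eq_xy; apply/ffunP => j; apply: (incr_ord_inj h_incr).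
by have := eq_xy j; rewrite !ffunE.
Qed.

Lemma admissible_relabel (A : {set row d q}) :
  admissible (relabel_row @: A) = admissible A.
Proof.
have relE x j : relabel_row x j = h (x j) by rewrite ffunE.
have h_inj := incr_ord_inj h_incr.
apply/admissibleP/admissibleP => -[decr col head up]; split.
- by move=> x xA j j' /(decr _ (imset_f _ xA)); rewrite !relE (incr_ord_mono h_incr).
- move=> x y xA yA j j' eq_xy; apply: (col _ _ (imset_f _ xA) (imset_f _ yA)).
  by rewrite !relE eq_xy.
- move=> x y xA yA j j0 eq_xy; apply: relabel_row_inj.
  by apply: (head _ _ (imset_f _ xA) (imset_f _ yA) j j0); rewrite !relE eq_xy.
- move=> x y xA yA j j' e eq_xy; apply: h_inj; rewrite -!relE.
  by apply: (up _ _ (imset_f _ xA) (imset_f _ yA) j j' e); rewrite !relE eq_xy.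
- by move=> _ /imsetP[x xA ->] j j' lt_j; rewrite !relE (incr_ord_mono h_incr); apply: decr.
- move=> _ _ /imsetP[x xA ->] /imsetP[y yA ->] j j'.
  by rewrite !relE => /h_inj; apply: col.
- move=> _ _ /imsetP[x xA ->] /imsetP[y yA ->] j j0; rewrite !relE => /h_inj eq_xy.
  by rewrite (head x y xA yA j j0 eq_xy).
- move=> _ _ /imsetP[x xA ->] /imsetP[y yA ->] j j' e; rewrite !relE => /h_inj eq_xy.
  by rewrite (up x y xA yA j j' e eq_xy).
Qed.

Lemma values_relabel (A : {set row d q}) : values (relabel_row @: A) = h @: values A.
Proof.
apply/setP => v; apply/imset2P/imsetP.
  case=> _ j /imsetP[x xA ->] _ ->.
  by exists (x j); [apply: imset2_f | rewrite ffunE].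
case=> _ /imset2P[x j xA _ ->] ->.
by exists (relabel_row x) j; rewrite ?imset_f ?ffunE.
Qed.

Lemma imset_relabel_preim (B : {set row d p}) (V : {set 'I_q}) :
  values B = h @: V -> relabel_row @: (relabel_row @^-1: B) = B.
Proof.
move=> vals_B; apply/setP => y; apply/imsetP/idP => [[x] | yB].
  by rewrite inE => ? ->.
have /fin_all_exists[x eq_x] : forall j, exists a, h a = y j.
  move=> j; have : y j \in h @: V by rewrite -vals_B imset2_f.
  by case/imsetP => a _ ->; exists a.
have eq_y : relabel_row [ffun j => x j] = y by apply/ffunP => j; rewrite !ffunE.
by exists [ffun j => x j]; rewrite // inE eq_y.
Qed.

Lemma nadm_relabel n (V : {set 'I_q}) : nadm d n V = nadm d n (h @: V).
Proof.
rewrite /nadm -(card_imset _ (imset_inj relabel_row_inj)).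
apply: eq_card => B; rewrite inE; apply/imsetP/and3P.
  case=> A; rewrite inE => /and3P[adm_A /eqP vals_A /eqP card_A] ->.
  rewrite admissible_relabel values_relabel vals_A card_imset ?card_A //.
  exact: relabel_row_inj.
case=> adm_B /eqP vals_B /eqP card_B; exists (relabel_row @^-1: B).
  rewrite inE -admissible_relabel -(inj_eq (imset_inj (incr_ord_inj h_incr))).
  rewrite -values_relabel -(card_imset _ relabel_row_inj) (imset_relabel_preim vals_B).
  by rewrite adm_B vals_B card_B !eqxx.
by rewrite (imset_relabel_preim vals_B).
Qed.
End Relabel.

Lemma nadm_card n d p (V : {set 'I_p}) : nadm d.+1 n V = P #|V| n d.+1.
Proof.
have val_inj_V : {in V &, injective (val : 'I_p -> nat)} by move=> a b _ _; apply: val_inj.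
have [g /key_increasingP g_incr <-] := exists_key_increasing val_inj_V.
rewrite -(nadm_relabel _ g_incr) P_nadm card_imset ?cardsT ?card_ord //.
exact: incr_ord_inj g_incr.
Qed.

Section EmptyIndex.
Variables (n d : nat).
Hypothesis nd0 : n * d = 0.
Implicit Types c : CRdata n d 1.

Lemma CRidx_empty (x : CRidx n d) : False.
Proof.
case: x => i j; suff : 0 < n * d by rewrite nd0.
by rewrite muln_gt0 (leq_ltn_trans _ (ltn_ord i)) ?(leq_ltn_trans _ (ltn_ord j)).
Qed.

Lemma CRsize_empty c : CRsize c = 0.
Proof.
apply/eqP; rewrite cards_eq0; apply/eqP/setP => C.
by rewrite inE; apply/negbTE/imsetP => -[x]; case: (CRidx_empty x).
Qed.

Lemma is_CR_empty c : is_CR c = (0 < d) || (n <= 1).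
Proof.
have tp : is_total_preorder c by apply/total_preorderP; split=> x; case: (CRidx_empty x).
have c3 : cond3 c by apply/cond3P => i j; case: (CRidx_empty (i, j)).
have c4 : cond4 c by apply/cond4P => i i' j; case: (CRidx_empty (i, j)).
have c5 : cond5 c by apply/cond5P => i i' j; case: (CRidx_empty (i, j)).
rewrite /is_CR tp cond2_unit c3 c4 c5 !andbT /cond1; case: posnP => [d0 | d_gt0] /=.
  apply/'forall_'forall_implyP/idP => [incr | le_n1 i i' lt_ii'].
    rewrite leqNgt; apply/negP => lt_1n.
    have := incr (Ordinal (ltnW lt_1n)) (Ordinal lt_1n) isT.
    by rewrite (ord1 (crY c _)) (ord1 (crY c _)).
  have := leq_trans (ltn_ord i') le_n1; rewrite ltnS leqn0 => /eqP i'0.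
  by rewrite i'0 in lt_ii'.
by apply/'forall_'forall_'forall_implyP => i i' j; case: (CRidx_empty (i, j)).
Qed.

Lemma card_CRdata_empty : #|CRdata n d 1| = 1.
Proof. by rewrite !card_prod !card_ffun !card_ord exp1n !card_prod !card_ord nd0. Qed.

Lemma P_empty p : P p n d = (p == 0) && ((0 < d) || (n <= 1)).
Proof.
rewrite /P /Pcount; have -> : [set c : CRdata n d 1 | is_CR c & CRsize c == p] =
                              if (p == 0) && ((0 < d) || (n <= 1)) then setT else set0.
  apply/setP => c; rewrite inE is_CR_empty CRsize_empty eq_sym andbC.
  by case: ifP; rewrite inE.
by case: ifP => _; rewrite ?cardsT ?card_CRdata_empty ?cards0.
Qed.
End EmptyIndex.

Lemma P0_nonempty n d : 0 < n -> 0 < d -> P 0 n d = 0.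
Proof.
move=> n_gt0 d_gt0; apply/eqP; rewrite cards_eq0; apply/eqP/setP => c.
rewrite !inE; apply/negbTE; rewrite negb_and -lt0n card_gt0 orbC; apply/orP; left.
by apply/set0Pn; exists (cr_class c (Ordinal n_gt0, Ordinal d_gt0)); apply: imset_f.
Qed.

Section OneColumn.
Variable p : nat.
Implicit Types A : {set row 1 p}.

Lemma admissible_row1 A : admissible A.
Proof.
apply/admissibleP; split=> [x _ j j' | x y _ _ j j' _ | x y _ _ j _ eq_xy | x y _ _ j j'].
- by rewrite !ord1.
- by rewrite !ord1.
- by apply/ffunP => i; rewrite !ord1 -(ord1 j).
- by rewrite !ord1.
Qed.

Lemma values_row1_eqT A : (values A == setT) = (A == setT).
Proof.
apply/eqP/eqP => [vals_A | ->]; apply/setP => x; rewrite inE.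
  have : x ord0 \in values A by rewrite vals_A inE.
  case/imset2P => y j yA _ eq_xy; suff -> : x = y by [].
  by apply/ffunP => i; rewrite !ord1 eq_xy (ord1 j).
by apply/imset2P; exists [ffun=> x] ord0; rewrite ?inE ?ffunE.
Qed.

Lemma nadm_row1 n : nadm 1 n [set: 'I_p] = (n == p).
Proof.
have card_rows : #|[set: row 1 p]| = p by rewrite cardsT card_ffun !card_ord expn1.
rewrite /nadm; have -> : [set A | [&& admissible A, values A == setT & #|A| == n]] =
                         if n == p then [set setT] else set0 :> {set {set row 1 p}}.
  apply/setP => A; rewrite inE admissible_row1 values_row1_eqT /=.
  case: ifP => [/eqP -> | ne_np]; rewrite !inE; case: (A =P setT) => [-> | _] //=.
    by rewrite card_rows eqxx.
  by rewrite card_rows eq_sym ne_np.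
by case: ifP; rewrite ?cards1 ?cards0.
Qed.
End OneColumn.

Section LastColumn.
Variables (d p : nat) (A : {set row d.+1 p}).
Hypothesis admA : admissible A.

Lemma adm_last_lt x j : x \in A -> j != ord_max -> x ord_max < x j.
Proof.
move=> xA ne_j; have /admissibleP[decr _ _ _] := admA; apply: decr => //=.
by rewrite ltn_neqAle -ltnS ltn_ord andbT.
Qed.

Lemma adm_agree_last x y j : x \in A -> y \in A -> x j = y j -> x ord_max = y ord_max.
Proof.
move=> xA yA; have /admissibleP[_ _ _ up] := admA.
suff agree m (i : 'I_d.+1) : m + i = d -> x i = y i -> x ord_max = y ord_max.
  by apply: (agree (d - j)); rewrite subnK // -ltnS.
elim: m i => [|m IHm] i.
  by rewrite add0n => i_max; rewrite (_ : i = ord_max) //; apply: val_inj.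
rewrite addSnnS => e eq_i; have lt_i : i.+1 < d.+1 by rewrite ltnS -[X in _ <= X]e leq_addl.
by apply: (IHm (Ordinal lt_i)) => //; apply: (up x y xA yA).
Qed.

Lemma adm_share_last x y j j' : x \in A -> y \in A -> x j = y j' -> x ord_max = y ord_max.
Proof.
move=> xA yA eq_xy; have /admissibleP[_ col _ _] := admA.
have eq_j := col x y xA yA j j' eq_xy; rewrite -eq_j in eq_xy.
exact: adm_agree_last eq_xy.
Qed.
End LastColumn.

Section Decomposition.
Variables (d p : nat).
Hypothesis d_gt0 : 0 < d.
Local Notation long := (row d.+1 p.+1).
Local Notation short := (row d p.+1).
Implicit Types (x : long) (y : short) (A C : {set long}) (B : {set short}).

Definition row_belast (x : long) : short := [ffun j => x (lift ord_max j)].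
Definition row_rcons0 (y : short) : long :=
  [ffun j => if unlift ord_max j is Some a then y a else ord0].

Lemma val_lift_max (a : 'I_d) : val (lift ord_max a) = val a.
Proof. exact: lift_max. Qed.

Lemma row_rcons0_max y : row_rcons0 y ord_max = ord0.
Proof. by rewrite ffunE unlift_none. Qed.

Lemma row_rcons0_lift y a : row_rcons0 y (lift ord_max a) = y a.
Proof. by rewrite ffunE liftK. Qed.

Lemma row_rcons0K : cancel row_rcons0 row_belast.
Proof. by move=> y; apply/ffunP => a; rewrite ffunE row_rcons0_lift. Qed.

Lemma row_belastK x : x ord_max = ord0 -> row_rcons0 (row_belast x) = x.
Proof.
move=> x_max; apply/ffunP => j; case: (unliftP ord_max j) => [a|] ->.
  by rewrite row_rcons0_lift ffunE.
by rewrite row_rcons0_max.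
Qed.

Lemma row_rcons0_inj : injective row_rcons0.
Proof. exact: can_inj row_rcons0K. Qed.

Lemma values_rcons0 B : B != set0 -> values (row_rcons0 @: B) = ord0 |: values B.
Proof.
case/set0Pn => y0 y0B; apply/setP => v; rewrite !inE.
apply/imset2P/orP => [[_ j /imsetP[y yB ->] _ ->] | [/eqP-> | /imset2P[y a yB _ ->]]].
- case: (unliftP ord_max j) => [a|] ->; last by rewrite row_rcons0_max eqxx; left.
  by rewrite row_rcons0_lift; right; apply: mem_values.
- by exists (row_rcons0 y0) ord_max; rewrite ?imset_f ?row_rcons0_max.
by exists (row_rcons0 y) (lift ord_max a); rewrite ?imset_f ?row_rcons0_lift.
Qed.

Lemma admissible_belast A : admissible A -> admissible (row_belast @: A).
Proof.
case/admissibleP => decr col head up; apply/admissibleP; split.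
- move=> _ /imsetP[x xA ->] a b lt_ab; rewrite !ffunE; apply: decr => //.
  by rewrite !lift_max.
- move=> _ _ /imsetP[x xA ->] /imsetP[y yA ->] a b; rewrite !ffunE.
  by move/(col x y xA yA)/lift_inj.
- move=> _ _ /imsetP[x xA ->] /imsetP[y yA ->] a a0; rewrite !ffunE => eq_xy.
  by rewrite (head x y xA yA (lift ord_max a)) // val_lift_max.
move=> _ _ /imsetP[x xA ->] /imsetP[y yA ->] a b e; rewrite !ffunE.
by apply: up; rewrite // !val_lift_max.
Qed.

Lemma admissible_rcons0 B : ord0 \notin values B -> admissible B ->
  admissible (row_rcons0 @: B).
Proof.
move=> no0 /admissibleP[decr col head up].
have nz y a : y \in B -> y a != ord0.
  by move=> yB; apply: contraNneq no0 => <-; apply: mem_values.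
apply/admissibleP; split.
- move=> _ /imsetP[y yB ->] j j' lt_j.
  case: (unliftP ord_max j') lt_j => [b|] ->; last by rewrite ltnNge -ltnS ltn_ord.
  case: (unliftP ord_max j) => [a|] ->; rewrite ?row_rcons0_lift ?row_rcons0_max.
    by rewrite !lift_max; apply: decr.
  by rewrite lt0n (nz _ _ yB).
- move=> _ _ /imsetP[y yB ->] /imsetP[z zB ->] j j'.
  case: (unliftP ord_max j) => [a|] ->; case: (unliftP ord_max j') => [b|] ->;
    rewrite ?row_rcons0_lift ?row_rcons0_max //.
  + by move/(col y z yB zB)->.
  + by move=> ya0; case/eqP: (nz _ a yB).
  + by move=> zb0; case/eqP: (nz _ b zB).
- move=> _ _ /imsetP[y yB ->] /imsetP[z zB ->] j j0.
  case: (unliftP ord_max j) j0 => [a|] -> j0; last by move: d_gt0; rewrite -j0 ltnn.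
  rewrite val_lift_max in j0.
  by rewrite !row_rcons0_lift => /(head y z yB zB a j0)->.
move=> _ _ /imsetP[y yB ->] /imsetP[z zB ->] j j' e.
case: (unliftP ord_max j') e => [b|] -> e; last by move: (ltn_ord j); rewrite e ltnn.
case: (unliftP ord_max j) e => [a|] -> e; rewrite ?row_rcons0_max // !row_rcons0_lift.
by apply: (up y z yB zB); move: e; rewrite !val_lift_max.
Qed.

Definition zrows A := A :&: [set x : long | x ord_max == ord0].
Definition zpart A : {set short} := row_belast @: zrows A.

Lemma zrowsE A : zrows A = row_rcons0 @: zpart A.
Proof.
rewrite -imset_comp -[LHS]imset_id; apply: eq_in_imset => x.
by rewrite !inE => /andP[_ /eqP/row_belastK].
Qed.

Lemma zrowsUD A : zrows A :|: A :\: zrows A = A.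
Proof. by apply/setP => x; rewrite !inE; case: (x \in A); rewrite ?andbT ?orbN. Qed.

Lemma disjoint_of_values A C : [disjoint values A & values C] -> [disjoint A & C].
Proof.
move=> dis; apply/pred0P => x /=; apply/negbTE/andP => -[xA xC].
by have := disjointFr dis (mem_values ord_max xA); rewrite mem_values.
Qed.

Definition zvalues (U : {set 'I_p}) : {set 'I_p.+1} := lift ord0 @: U.
Definition nzvalues (U : {set 'I_p}) : {set 'I_p.+1} := ~: (ord0 |: zvalues U).

Lemma ord0_notin_zvalues U : ord0 \notin zvalues U.
Proof. by apply/imsetP => -[v _ /eqP]; apply/negP; rewrite neq_lift. Qed.

Lemma card_zvalues U : #|zvalues U| = #|U|.
Proof. by rewrite card_imset //; apply: lift_inj. Qed.

Lemma card_nzvalues U : #|nzvalues U| = p - #|U|.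
Proof.
have := cardsC (ord0 |: zvalues U).
rewrite cardsU1 ord0_notin_zvalues card_zvalues card_ord add1n.
by move/(canRL (addKn _)); rewrite subSS.
Qed.

Section ZeroRows.
Variable A : {set long}.
Hypothesis admA : admissible A.

Lemma ord0_notin_zpart : ord0 \notin values (zpart A).
Proof.
apply/imset2P => -[_ a /imsetP[x /setIP[xA _] ->] _]; rewrite ffunE => /esym x_a.
have ne_a : lift ord_max a != ord_max by rewrite eq_sym neq_lift.
by have := adm_last_lt admA xA ne_a; rewrite x_a.
Qed.

Lemma disjoint_zrows : [disjoint values (zrows A) & values (A :\: zrows A)].
Proof.
apply/pred0P => v /=; apply/negbTE/andP.
case=> /imset2P[x j /setIP[xA]] /[!inE] /eqP x_max _ -> /imset2P[y j' /setDP[yA]].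
move=> /[!inE] /negP y_max _ /(adm_share_last admA xA yA) eq_max.
by apply: y_max; rewrite yA -eq_max x_max eqxx.
Qed.

Lemma zrows_neq0 : values A = setT -> zrows A != set0.
Proof.
move=> vals_A; have : ord0 \in values A by rewrite vals_A inE.
case/imset2P => x j xA _ x_j; apply/set0Pn; exists x; rewrite !inE xA /=.
have [j_max | ne_j] := eqVneq j ord_max; first by rewrite -j_max -x_j.
by have := adm_last_lt admA xA ne_j; rewrite -x_j.
Qed.

Lemma zpart_zvalues : values (zpart A) = zvalues [set u | lift ord0 u \in values (zpart A)].
Proof.
apply/setP => v; case: (unliftP ord0 v) => [u|] ->.
  by rewrite /zvalues mem_imset ?inE //; apply: lift_inj.
by rewrite (negbTE ord0_notin_zpart) (negbTE (ord0_notin_zvalues _)).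
Qed.
End ZeroRows.

Section Fiber.
Variables (n k : nat) (U : {set 'I_p}).
Hypotheses (k_gt0 : 0 < k) (le_kn : k <= n).

Definition fiber :=
  [set A : {set long} | [&& admissible A, values A == setT, #|A| == n,
                            values (zpart A) == zvalues U & #|zrows A| == k]].
Definition pieces :=
  setX [set B : {set short} | [&& admissible B, values B == zvalues U & #|B| == k]]
       [set C : {set long} | [&& admissible C, values C == nzvalues U & #|C| == n - k]].

Definition glue (BC : {set short} * {set long}) := row_rcons0 @: BC.1 :|: BC.2.
Definition cut A := (zpart A, A :\: zrows A).

Lemma cutK A : glue (cut A) = A.
Proof. by rewrite /glue /= -zrowsE zrowsUD. Qed.

Lemma cut_pieces A : A \in fiber -> cut A \in pieces.
Proof.
rewrite inE => /and5P[admA /eqP vals_A /eqP card_A /eqP vals_z /eqP card_z].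
have zrows_sub : zrows A \subset A by apply: subsetIl.
have belast_inj : {in zrows A &, injective row_belast}.
  move=> x y; rewrite !inE => /andP[_ /eqP/row_belastK x_eq] /andP[_ /eqP/row_belastK y_eq].
  by move=> eq_xy; rewrite -x_eq -y_eq eq_xy.
have card_zpart : #|zpart A| = k by rewrite card_in_imset.
have zpart_n0 : zpart A != set0 by rewrite -card_gt0 card_zpart.
rewrite !inE admissible_belast ?(admissibleS zrows_sub) ?(admissibleS (subsetDl _ _)) //=.
rewrite vals_z card_zpart cardsDS // card_A card_z !eqxx /= andbT.
rewrite /nzvalues -vals_z -values_rcons0 // -zrowsE; apply/eqP/disjoint_cover_setC.
  by rewrite -valuesU zrowsUD vals_A.
exact: disjoint_zrows.
Qed.

Section Glue.
Variables (B : {set short}) (C : {set long}).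
Hypotheses (admB : admissible B) (vals_B : values B = zvalues U) (card_B : #|B| = k).
Hypotheses (admC : admissible C) (vals_C : values C = nzvalues U) (card_C : #|C| = n - k).

Lemma values_rcons0_pieces : values (row_rcons0 @: B) = ord0 |: zvalues U.
Proof. by rewrite values_rcons0 ?vals_B // -card_gt0 card_B. Qed.

Lemma disjoint_pieces_values : [disjoint values (row_rcons0 @: B) & values C].
Proof. by rewrite values_rcons0_pieces vals_C disjoints_subset setCK. Qed.

Lemma zrows_glue : zrows (glue (B, C)) = row_rcons0 @: B.
Proof.
apply/setP => x; rewrite !inE; apply/andP/idP => [[/orP[// | xC] /eqP x_max] | xB].
  by have := mem_values ord_max xC; rewrite x_max vals_C !inE eqxx.
by rewrite xB; case/imsetP: xB => y _ ->; rewrite row_rcons0_max.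
Qed.

Lemma glueK : cut (glue (B, C)) = (B, C).
Proof.
rewrite /cut /zpart zrows_glue -imset_comp (eq_imset _ row_rcons0K) imset_id; congr (_, _).
rewrite /glue setDUl setDv set0U; apply/setDidPl.
by rewrite disjoint_sym disjoint_of_values // disjoint_pieces_values.
Qed.

Lemma glue_fiber : glue (B, C) \in fiber.
Proof.
have no0_B : ord0 \notin values B by rewrite vals_B ord0_notin_zvalues.
have /disjoint_setI0 dis := disjoint_of_values disjoint_pieces_values.
have card_zrows : #|row_rcons0 @: B| = k by rewrite card_imset //; apply: row_rcons0_inj.
rewrite inE admissibleU ?disjoint_pieces_values // admissible_rcons0 // admC /=.
rewrite valuesU values_rcons0_pieces vals_C setUCr eqxx /=.
rewrite cardsU dis cards0 subn0 card_zrows card_C subnKC // eqxx /=.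
by rewrite -[zpart _]/(cut (glue (B, C))).1 glueK /= vals_B zrows_glue card_zrows !eqxx.
Qed.
End Glue.

Lemma card_fiber : #|fiber| = nadm d k (zvalues U) * nadm d.+1 (n - k) (nzvalues U).
Proof.
have glue_ok BC : BC \in pieces -> glue BC \in fiber /\ cut (glue BC) = BC.
  case: BC => B C /setXP[B_in C_in]; rewrite inE in B_in; rewrite inE in C_in.
  case/and3P: B_in => admB /eqP vB /eqP cB; case/and3P: C_in => admC /eqP vC /eqP cC.
  by split; [apply: glue_fiber | apply: glueK].
have glue_inj : {in pieces &, injective glue}.
  by apply: (can_in_inj (g := cut)) => BC /glue_ok[].
have -> : fiber = glue @: pieces.
  apply/setP => A; apply/idP/imsetP => [A_fib | [BC /glue_ok[BC_fib _] -> //]].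
  by exists (cut A); rewrite ?cutK ?cut_pieces.
by rewrite card_in_imset // cardsX.
Qed.
End Fiber.
End Decomposition.

Lemma nadm_split d p n : 0 < d ->
  nadm d.+1 n [set: 'I_p.+1] =
  \sum_(U : {set 'I_p}) \sum_(1 <= k < n.+1)
    nadm d k (zvalues U) * nadm d.+1 (n - k) (nzvalues U).
Proof.
move=> d_gt0; rewrite /nadm; set X := [set A | _].
pose shift (A : {set row d.+1 p.+1}) := [set u | lift ord0 u \in values (zpart A)].
rewrite (card_fibers X shift); apply: eq_bigr => U _.
rewrite (@card_fibers_nat _ _ (fun A => #|zrows A|) n.+1); last first.
  move=> A; rewrite !inE => /andP[/and3P[_ _ /eqP <-] _].
  by rewrite ltnS subset_leq_card ?subsetIl.
rewrite big_ltn // (_ : #|_| = 0) ?add0n; last first.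
  apply/eqP; rewrite cards_eq0; apply/eqP/setP => A; rewrite !inE; apply/negP.
  case/andP => /andP[/and3P[admA /eqP vals_A _] _].
  by rewrite cards_eq0 (negbTE (zrows_neq0 admA vals_A)).
apply: eq_big_nat => k /andP[k_gt0 le_kn]; rewrite -card_fiber //; apply: eq_card => A.
rewrite !inE; case: (boolP (admissible A)) => //= admA.
by rewrite (zpart_zvalues admA) (inj_eq (imset_inj (@lift_inj _ ord0))) -!andbA.
Qed.

Lemma P_rec d p n : P p.+1 n d.+2 =
  \sum_(0 <= i < p.+1) 'C(p, i) * \sum_(1 <= k < n.+1) P i k d.+1 * P (p - i) (n - k) d.+2.
Proof.
pose F i := \sum_(1 <= k < n.+1) P i k d.+1 * P (p - i) (n - k) d.+2.
rewrite big_mkord P_nadm nadm_split // -(sum_set_card p F).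
apply: eq_bigr => U _; apply: eq_bigr => k _.
by rewrite !nadm_card card_zvalues card_nzvalues.
Qed.

Theorem lemma8p1 (n d p : nat) :
  (d = 0 -> 2 <= n -> P p n d = 0) /\
      (n = 0 -> p = 0 -> P p n d = 1) /\
      (n = 0 -> 1 <= p -> P p n d = 0) /\
      (d = 0 -> n = 1 -> p = 0 -> P p n d = 1) /\
      (d = 0 -> n = 1 -> 1 <= p -> P p n d = 0) /\
      (d = 1 -> 1 <= n -> n = p -> P p n d = 1) /\
      (d = 1 -> 1 <= n -> n <> p -> P p n d = 0) /\
      (2 <= d -> 1 <= n -> p = 0 -> P p n d = 0) /\
      (2 <= d -> 1 <= n -> 1 <= p ->
         P p n d = \sum_(1 <= j < n.+1) \sum_(0 <= i < p)
                     'C(p.-1, i) * P i j d.-1 * P (p.-1 - i) (n - j) d).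
Proof.
have P_d0 m q : P q m 0 = (q == 0) && (m <= 1) by rewrite P_empty ?muln0.
have P_n0 m q : P q 0 m = (q == 0) by rewrite P_empty // orbT andbT.
have P_d1 m q : P q m 1 = (m == q) by rewrite P_nadm nadm_row1.
split; first by move=> -> n2; rewrite P_d0 leqNgt n2 andbF.
split; first by move=> -> ->; rewrite P_n0.
split; first by move=> -> p1; rewrite P_n0 eqn0Ngt p1.
split; first by move=> -> -> ->.
split; first by move=> -> -> p1; rewrite P_d0 eqn0Ngt p1.
split; first by move=> -> _ ->; rewrite P_d1 eqxx.
split; first by move=> -> _ ne_np; rewrite P_d1; case: eqP.
split; first by move=> d2 n1 ->; apply: P0_nonempty => //; apply: ltn_trans d2.
case: d => [|[|d]] // _ n1; case: p => [|p] // _.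
rewrite P_rec /=; under eq_bigr => i _ do rewrite big_distrr.
by rewrite exchange_big_nat; apply: eq_bigr => k _; apply: eq_bigr => i _; rewrite /= mulnA.
Qed.
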